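(* Assume $\operatorname{rank}(X)=n$ and that $\xi_r(\varpi^N)<1/2$ for some $r\in\{0,\ldots,N\}$; set $r^*(\varpi^N)=\max\{r\in\{0,\ldots,N\}:\xi_r(\varpi^N)<1/2\}$. Suppose there exists $\tilde A\in\mathbb{R}^{n\times s}$ with pairwise distinct columns such that $\min_{i\in\mathbb{S}}|I_i(\tilde A)|\ge s\,\nu_n(X)$ and $\|\phi(\tilde A)\|_0\le r^*(\varpi^N)$. Then $\Psi(\varpi^N)=\{\mathrm{set}(\tilde A)\}$.
   Context: Data: integers $n,s,N\ge1$ and a dataset $\varpi^N=((x_1,y_1),\ldots,(x_N,y_N))$ with $x_t\in\mathbb{R}^n$, $y_t\in\mathbb{R}$; $X=[x_1\ \cdots\ x_N]\in\mathbb{R}^{n\times N}$. Let $\mathbb{T}=\{1,\ldots,N\}$, $\mathbb{S}=\{1,\ldots,s\}$. For $A=[a_1\ \cdots\ a_s]\in\mathbb{R}^{n\times s}$, $\mathrm{set}(A)=\{a_1,\ldots,a_s\}$; $\sigma_A:\mathbb{T}\to\mathbb{S}$ is a switching signal satisfying $\sigma_A(t)\in\arg\min_{i\in\mathbb{S}}|y_t-x_t^\top a_i|$ for all $t$, selected uniquely by a fixed rule depending only on $A$ and the data (among all admissible choices, one maximizing $\min_{i}|I_i(A)|$, ties then broken by assigning the smallest admissible index). $I_i(A)=\{t\in\mathbb{T}:\sigma_A(t)=i\}$. $\phi(A)=\big(y_1-x_1^\top a_{\sigma_A(1)},\ldots,y_N-x_N^\top a_{\sigma_A(N)}\big)^\top$,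 $\mathcal{J}(A)=\|\phi(A)\|_1=\sum_t\min_i|y_t-a_i^\top x_t|$, and $\phi_{\mathcal{T}}(A)$ its subvector indexed by $\mathcal{T}\subset\mathbb{T}$. $\|w\|_0$ is the number of nonzero entries. The LSM estimator is $\Psi(\varpi^N)=\{\mathrm{set}(\hat A):\hat A\in\arg\min_{A\in\mathbb{R}^{n\times s}}\mathcal{J}(A)\}$. The $r$-th concentration ratio is $$\xi_r(\varpi^N)=\sup\Big\{\frac{\|\phi_{\mathcal{T}}(A)-\phi_{\mathcal{T}}(A')\|_1}{\|\phi(A)-\phi(A')\|_1}: A,A'\in\mathbb{R}^{n\times s},\ \mathcal{T}\subset\mathbb{T},\ \phi(A)\ne\phi(A'),\ |\mathcal{T}|\le r\Big\}.$$ Genericity index: for $\operatorname{rank}(X)=n$, $\nu_n(X)$ is the smallest integer $m$ such that every submatrix $X_{\mathcal{S}}$ formed by $m$ columns of $X$ ($\mathcal{S}\subset\mathbb{T}$, $|\mathcal{S}|=m$) has rank $n$. *)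

From HB Require Import structures.
From mathcomp Require Import all_boot all_order all_algebra.
From mathcomp Require Import classical_sets reals.

Set Implicit Arguments.
Unset Strict Implicit.
Unset Printing Implicit Defensive.

Import Order.TTheory GRing.Theory Num.Theory.
Local Open Scope ring_scope.

Section LSM.
Variables (R : realType) (n s N : nat).
(* Data: X = [x_1 ... x_N] (column t of X is x_t), y = (y_1,...,y_N). *)
Variables (X : 'M[R]_(n, N)) (y : 'rV[R]_N).

Definition res (A : 'M[R]_(n, s)) (t : 'I_N) (i : 'I_s) : R :=
  y 0 t - \sum_(k < n) X k t * A k i.

Definition admissible (A : 'M[R]_(n, s)) (f : {ffun 'I_N -> 'I_s}) : bool :=
  [forall t, forall i, `|res A t (f t)| <= `|res A t i|].

(* min_i |I_i| for a signal f (default N is >= every count, so for s >= 1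
   this is the true minimum) *)
Definition min_card (f : {ffun 'I_N -> 'I_s}) : nat :=
  \big[minn/N]_(i < s) #|[set t | f t == i]|.

Definition optimal (A : 'M[R]_(n, s)) (f : {ffun 'I_N -> 'I_s}) : bool :=
  admissible A f &&
  [forall g : {ffun 'I_N -> 'I_s}, admissible A g ==> (min_card g <= min_card f)%N].

(* base-s code of f, with f(first index) the most significant digit:
   comparing codes = lexicographic comparison of (f t_1, ..., f t_N) *)
Definition lex_code (f : {ffun 'I_N -> 'I_s}) : nat :=
  (\sum_(t < N) f t * s ^ (N.-1 - t))%N.

Definition chosen (A : 'M[R]_(n, s)) (f : {ffun 'I_N -> 'I_s}) : bool :=
  optimal A f &&
  [forall g : {ffun 'I_N -> 'I_s}, optimal A g ==> (lex_code f <= lex_code g)%N].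

(* sigma_A ; it is [Some _] whenever s >= 1 *)
Definition sigma (A : 'M[R]_(n, s)) : option {ffun 'I_N -> 'I_s} :=
  [pick f | chosen A f].

Definition sigma_at (A : 'M[R]_(n, s)) (t : 'I_N) : option 'I_s :=
  omap (fun f : {ffun 'I_N -> 'I_s} => f t) (sigma A).

Definition Iset (A : 'M[R]_(n, s)) (i : 'I_s) : {set 'I_N} :=
  [set t | sigma_at A t == Some i].

(* phi(A) (the [None] branch never occurs when s >= 1) *)
Definition phi (A : 'M[R]_(n, s)) (t : 'I_N) : R :=
  match sigma_at A t with Some i => res A t i | None => y 0 t end.

Definition J (A : 'M[R]_(n, s)) : R := \sum_(t < N) `|phi A t|.

Definition norm0 (w : 'I_N -> R) : nat := #|[set t | w t != 0]|.

Definition colset (A : 'M[R]_(n, s)) : set 'cV[R]_n :=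
  range (fun i : 'I_s => col i A).

Definition Psi : set (set 'cV[R]_n) :=
  [set S | exists Ahat : 'M[R]_(n, s),
     (forall A : 'M[R]_(n, s), J Ahat <= J A) /\ S = colset Ahat]%classic.

Definition xi (r : nat) : R :=
  sup [set q : R | exists (A A' : 'M[R]_(n, s)) (T : {set 'I_N}),
        phi A <> phi A' /\ (#|T| <= r)%N /\
        q = (\sum_(t in T) `|phi A t - phi A' t|) /
            (\sum_(t < N) `|phi A t - phi A' t|)]%classic.

Definition rstar : nat := \max_(r < N.+1 | (xi r < 1 / 2)%R) r.

Definition good_m (m : nat) : bool :=
  [forall S : {set 'I_N}, (#|S| == m) ==>
     (\rank (colsub (fun j : 'I_#|S| => enum_val j) X) == n)].

(* genericity index nu_n(X): the smallest such m (N is one when rank X = n) *)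
Definition nu : nat := (\big[minn/N]_(m < N.+1 | good_m m) m)%N.

End LSM.

From HB Require Import structures.
From mathcomp Require Import all_boot all_order all_algebra.
From mathcomp Require Import classical_sets reals.
From mathcomp Require Import lra zify.
Set Implicit Arguments.
Unset Strict Implicit.
Unset Printing Implicit Defensive.

Import Order.TTheory GRing.Theory Num.Theory.
Local Open Scope ring_scope.

(* Let b = phi(Atil), supported on T with |T| <= r^*, and
       let a = phi(A) for another A.  Since xi_{r^*} < 1/2, the difference
       d = a - b puts less than half of its l1-mass on T; an elementary
       l1 estimate (l1_support_decrease) then gives ||b||_1 < ||a||_1
       whenever a <> b.  Hence Atil minimizes J, and every minimizer Ahat
       satisfies phi(Ahat) = phi(Atil).
   (2) Identification.  If phi(Ahat) = phi(Atil), then for each i the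
       s*nu(X) samples of I_i(Atil) are split among the s modes of Ahat, so
       some mode j receives at least nu(X) of them (pigeonhole_class); on
       these samples x_t^T (a_i - ahat_j) = 0, and by definition of nu(X)
       this forces a_i = ahat_j (genericity_kernel).  Distinctness of the
       columns of Atil turns i |-> j into a bijection, so set(Ahat) = set(Atil). *)

Lemma pigeonhole_class (N s m : nat) (G : {set 'I_N}) (f : 'I_N -> 'I_s) :
  (0 < s)%N -> (s * m <= #|G|)%N ->
  exists j, (m <= #|[set t in G | f t == j]|)%N.
Proof.
move=> s_gt0 hG; apply/existsP; apply: contraLR hG => /existsPn small.
rewrite -ltnNge.
have cardG : #|G| = (\sum_(j < s) #|[set t in G | f t == j]|)%N.
  rewrite -sum1_card (partition_big f xpredT) //=.
  by apply: eq_bigr => j _; rewrite -sum1_card; apply: eq_bigl => t; rewrite inE.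
have m_gt0 : (0 < m)%N.
  by move: (small (Ordinal s_gt0)); rewrite -ltnNge; apply: leq_ltn_trans.
have : (#|G| <= \sum_(j < s) m.-1)%N.
  by rewrite cardG; apply: leq_sum => j _; move: (small j); rewrite -ltnNge; lia.
rewrite sum_nat_const card_ord => /leq_ltn_trans; apply.
by rewrite ltn_pmul2l //; lia.
Qed.

(* A partial l1 sum never exceeds the full one, so their ratio is at most 1
   (with the convention x / 0 = 0). *)
Lemma partial_l1_ratio_le1 (R : realFieldType) (N : nat) (T : {set 'I_N})
    (f : 'I_N -> R) :
  (\sum_(t in T) `|f t|) / (\sum_(t < N) `|f t|) <= 1.
Proof.
have partial_le : \sum_(t in T) `|f t| <= \sum_(t < N) `|f t|.
  by rewrite big_mkcond /=; apply: ler_sum => t _; case: ifP.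
have [->|nz] := eqVneq (\sum_(t < N) `|f t|) 0; first by rewrite invr0 mulr0.
have pos : 0 < \sum_(t < N) `|f t| by rewrite lt0r nz sumr_ge0.
by rewrite ler_pdivrMr // mul1r.
Qed.

(* Pointwise |a_t| >= |b_t| + |d_t| - 2 [t in T] |d_t| with d = a - b. *)
Lemma l1_support_decrease (R : realFieldType) (N : nat) (T : {set 'I_N})
    (a b : 'I_N -> R) :
  (forall t, t \notin T -> b t = 0) ->
  2 * \sum_(t in T) `|a t - b t| < \sum_(t < N) `|a t - b t| ->
  \sum_(t < N) `|b t| < \sum_(t < N) `|a t|.
Proof.
move=> supp conc; set d := fun t => a t - b t.
have pointwise t :
    `|b t| + `|d t| - 2 * (if t \in T then `|d t| else 0) <= `|a t|.
  case: ifPn => tT.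
  - have : `|b t| <= `|a t| + `|d t|.
      by have := ler_normB (a t) (a t - b t); rewrite opprB addrC subrK.
    lra.
  - by rewrite /d supp // subr0 normr0 mulr0 subr0 add0r.
have : \sum_(t < N) (`|b t| + `|d t| - 2 * (if t \in T then `|d t| else 0))
         <= \sum_(t < N) `|a t| by apply: ler_sum => t _; exact: pointwise.
rewrite sumrB big_split /= -mulr_sumr -big_mkcond /=; lra.
Qed.

Lemma full_row_rank_kernel (F : fieldType) (n p : nat) (M : 'M[F]_(n, p))
    (v : 'cV[F]_n) :
  \rank M = n -> (forall j, \sum_(k < n) M k j * v k 0 = 0) -> v = 0.
Proof.
move=> rkM orth; have freeM : row_free M by rewrite /row_free rkM.
have : v^T *m M == 0.
  apply/eqP/matrixP => i j; rewrite !mxE -[RHS](orth j).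
  by apply: eq_bigr => k _; rewrite !mxE mulrC (ord1 i).
by rewrite mulmx_free_eq0 // => /eqP vT0; rewrite -(trmxK v) vT0 trmx0.
Qed.

Section Identifiability.
Variables (R : realType) (n s N : nat).
Variables (X : 'M[R]_(n, N)) (y : 'rV[R]_N).
Hypothesis s_gt0 : (0 < s)%N.

(* The switching signal is always defined: an admissible signal exists
   (pointwise argmin), hence an optimal one (argmax of min_card), hence a
   chosen one (argmin of lex_code). *)
Lemma sigma_some (A : 'M[R]_(n, s)) : exists f, sigma X y A = Some f.
Proof.
pose i0 : 'I_s := Ordinal s_gt0.
pose f0 : {ffun 'I_N -> 'I_s} :=
  [ffun t => extremum (fun a b : R => a <= b) i0 xpredT
               (fun i => `|res X y A t i|)].
have adm0 : admissible X y A f0.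
  apply/forallP => t; apply/forallP => i; rewrite ffunE.
  case: extremumP => // [a b c|a b|j _ Hj]; [exact: le_trans|exact: le_total|].
  exact: Hj.
pose f1 := fintype.arg_max f0 (admissible X y A) (@min_card s N).
have opt1 : optimal X y A f1.
  rewrite /f1; case: arg_maxnP => // g adm_g gmax.
  by apply/andP; split=> //; apply/forallP => h; apply/implyP; exact: gmax.
pose f2 := fintype.arg_min f1 (optimal X y A) (@lex_code s N).
have ch2 : chosen X y A f2.
  rewrite /f2; case: arg_minnP => // g opt_g gmin.
  by apply/andP; split=> //; apply/forallP => h; apply/implyP; exact: gmin.
rewrite /sigma; case: pickP => [f _|none]; first by exists f.
by move: (none f2); rewrite ch2.
Qed.

Lemma signal_spec (A : 'M[R]_(n, s)) : exists f : {ffun 'I_N -> 'I_s},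
  (forall t, phi X y A t = res X y A t (f t)) /\
  (forall i, Iset X y A i = [set t | f t == i]).
Proof.
have [f sig] := sigma_some A; exists f; split=> [t|i].
  by rewrite /phi /sigma_at sig.
by apply/setP => t; rewrite !inE /sigma_at sig.
Qed.

Lemma ratio_le_xi (r : nat) (A A' : 'M[R]_(n, s)) (T : {set 'I_N}) :
  phi X y A <> phi X y A' -> (#|T| <= r)%N ->
  (\sum_(t in T) `|phi X y A t - phi X y A' t|) /
    (\sum_(t < N) `|phi X y A t - phi X y A' t|) <= xi s X y r.
Proof.
move=> neq cardT; apply: ub_le_sup; last by exists A, A', T.
by exists 1 => q [A1 [A2 [T1 [_ [_ ->]]]]]; exact: partial_l1_ratio_le1.
Qed.

Lemma cost_strict_decrease (r : nat) (Atil A : 'M[R]_(n, s)) :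
  xi s X y r < 1 / 2 -> (norm0 (phi X y Atil) <= r)%N ->
  phi X y A <> phi X y Atil -> J X y Atil < J X y A.
Proof.
move=> xi_small sparse neq.
set a := phi X y A; set b := phi X y Atil; pose T := [set t | b t != 0].
have [t0 diff0] : exists t0, a t0 - b t0 != 0.
  apply/existsP; apply: contra_notT neq => /existsPn same.
  by apply: boolp.funext => t; apply/eqP; rewrite -subr_eq0 -[_ == _]negbK.
have mass_pos : 0 < \sum_(t < N) `|a t - b t|.
  by rewrite (bigD1 t0) //= ltr_pwDl ?normr_gt0 // sumr_ge0.
have := le_lt_trans (ratio_le_xi (T := T) neq sparse) xi_small.
rewrite ltr_pdivrMr // => conc.
apply: (l1_support_decrease (T := T)) => [t|]; first by rewrite inE negbK => /eqP.
lra.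
Qed.

Lemma nu_spec : (nu X == N) || good_m X (nu X).
Proof.
rewrite /nu; apply: (big_ind (fun m => (m == N) || good_m X m)).
- by rewrite eqxx.
- by move=> a b ? ?; rewrite /minn; case: ifP.
- by move=> i ->; rewrite orbT.
Qed.

Lemma genericity_kernel (G : {set 'I_N}) (v : 'cV[R]_n) :
  \rank X = n -> (nu X <= #|G|)%N ->
  (forall t, t \in G -> \sum_(k < n) X k t * v k 0 = 0) -> v = 0.
Proof.
move=> rkX bigG orth; case/orP: nu_spec => [/eqP nuN | good].
  have GT : G = [set: 'I_N]%SET.
    by apply/eqP; rewrite eqEcard finset.subsetT cardsT card_ord; rewrite nuN in bigG.
  by apply: (full_row_rank_kernel rkX) => j; apply: orth; rewrite GT inE.
pose S := [set t in take (nu X) (enum G)].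
have cardS : #|S| = nu X.
  have -> : #|S| = #|take (nu X) (enum G)| by apply: eq_card => t; rewrite inE.
  have /card_uniqP -> : uniq (take (nu X) (enum G)) by rewrite take_uniq ?enum_uniq.
  by rewrite size_takel // -cardE.
have SG t : t \in S -> t \in G by rewrite inE => /mem_take; rewrite mem_enum.
have /eqP rkS := implyP (forallP good S) (introT eqP cardS).
apply: (full_row_rank_kernel rkS) => j.
under eq_bigr do rewrite mxE.
by apply/orth/SG/enum_valP.
Qed.

Lemma colset_of_phi_eq (Atil Ahat : 'M[R]_(n, s)) :
  \rank X = n ->
  (forall i j : 'I_s, i != j -> col i Atil != col j Atil) ->
  (forall i : 'I_s, (s * nu X <= #|Iset X y Atil i|)%N) ->
  phi X y Ahat = phi X y Atil -> colset Ahat = colset Atil.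
Proof.
move=> rkX distinct classes same_phi.
have [f [phiA _]] := signal_spec Ahat.
have [g [phiT IsetT]] := signal_spec Atil.
have matched i : exists j, col i Atil = col j Ahat.
  have [j big_j] := pigeonhole_class f s_gt0 (classes i).
  exists j; apply/eqP; rewrite -subr_eq0; apply/eqP.
  apply: (genericity_kernel rkX big_j) => t.
  rewrite inE IsetT inE => /andP[/eqP gt /eqP ft].
  have := congr1 (fun F => F t) same_phi.
  rewrite /= phiA phiT ft gt /res => eq_res.
  have same_fit : \sum_(k < n) X k t * Ahat k j = \sum_(k < n) X k t * Atil k i.
    by lra.
  transitivity (\sum_(k < n) X k t * Atil k i - \sum_(k < n) X k t * Ahat k j).
    by rewrite -sumrB; apply: eq_bigr => k _; rewrite !mxE mulrBr.
  by rewrite same_fit subrr.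
pose h i := odflt i [pick j | col i Atil == col j Ahat].
have colh i : col i Atil = col (h i) Ahat.
  rewrite /h; case: pickP => [j /eqP //|none].
  by have [j hj] := matched i; move: (none j); rewrite hj eqxx.
have h_inj : injective h.
  by move=> i1 i2 e; apply/eqP; apply: contraT => /distinct; rewrite !colh e eqxx.
have [hinv hK1 hK2] := injF_bij h_inj.
apply/seteqP; split => x [j _ <-].
  by exists (hinv j) => //; rewrite colh hK2.
by exists (h j) => //; rewrite colh.
Qed.

End Identifiability.

Lemma xi_rstar (R : realType) (n s N : nat) (X : 'M[R]_(n, N)) (y : 'rV[R]_N) :
  (exists r : nat, (r <= N)%N /\ xi s X y r < 1 / 2) ->
  xi s X y (rstar s X y) < 1 / 2.
Proof.
move=> [r [r_le xi_r]]; rewrite /rstar.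
have [|i0 hi0 ->] := @eq_bigmax_cond _ [pred r : 'I_N.+1 | xi s X y r < 1 / 2]
                       (fun r => nat_of_ord r); last by move: hi0; rewrite inE.
by apply/card_gt0P; exists (Ordinal (r_le : (r < N.+1)%N)); rewrite inE.
Qed.

Theorem theorem1 (R : realType) (n s N : nat)
  (X : 'M[R]_(n, N)) (y : 'rV[R]_N)
  (hn : (1 <= n)%N) (hs : (1 <= s)%N) (hN : (1 <= N)%N)
  (hrank : \rank X = n)
  (hxi : exists r : nat, (r <= N)%N /\ xi s X y r < 1 / 2)
  (Atil : 'M[R]_(n, s))
  (hdist : forall i j : 'I_s, i != j -> col i Atil != col j Atil)
  (hcard : forall i : 'I_s, (s * nu X <= #|Iset X y Atil i|)%N)
  (hsparse : (norm0 (phi X y Atil) <= rstar s X y)%N) :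
  Psi s X y = [set colset Atil]%classic.
Proof.
have decrease := cost_strict_decrease (xi_rstar hxi) hsparse.
have Atil_min (A : 'M[R]_(n, s)) : J X y Atil <= J X y A.
  case: (boolp.pselect (phi X y A = phi X y Atil)) => [same|neq].
    by rewrite /J same.
  exact/ltW/decrease.
apply/seteqP; split => S /=; last by move->; exists Atil; split.
case=> Ahat [Ahat_min ->].
apply: (colset_of_phi_eq hs hrank hdist hcard).
case: (boolp.pselect (phi X y Ahat = phi X y Atil)) => [//|neq].
by move: (decrease _ neq); rewrite ltNge Ahat_min.
Qed.
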